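(* Let $X=\{a,\dots,b\}\subseteq\mathbb{N}$, let $f^\alpha:\mathcal{P}^n\to X$ be a median voter scheme with fixed ballots $\alpha_1\le\dots\le\alpha_{n-1}$ in $X$, and let $i\in N$. Then $x\in V_i$ if and only if $x<\alpha_1$ or $x>\alpha_{n-1}$.
   Context: $N=\{1,\dots,n\}$, $n\ge2$; $X=\{a,a+1,\dots,b\}$, $|X|\ge2$; $\mathcal{P}$ all strict linear orders on $X$; $t(P_i)$ the top of $P_i$. $f^\alpha(P)=\mathrm{med}\{t(P_1),\dots,t(P_n),\alpha_1,\dots,\alpha_{n-1}\}$. Option set $O(P_i)=\{f^\alpha(P_i,P_{-i}):P_{-i}\in\mathcal{P}^{n-1}\}$. Agent $i$ vetoes $x$ via $P_i$ if $x\notin O(P_i)$; $V_i$ is the set of alternatives that $i$ vetoes via some preference $P_i\in\mathcal{P}$. *)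

From mathcomp Require Import all_boot.
Set Implicit Arguments. Unset Strict Implicit. Unset Printing Implicit Defensive.

Definition alts (a b : nat) : seq nat := iota a (b - a).+1.
Definition inX (a b x : nat) : bool := (a <= x) && (x <= b).

(* A strict linear order on X is represented by the ranking list of X from
   best to worst: a duplicate-free enumeration of X (a permutation of X). *)
Definition is_pref (a b : nat) (P : seq nat) : bool := perm_eq P (alts a b).

Definition top (a : nat) (P : seq nat) : nat := head a P.

Definition med (s : seq nat) : nat := nth 0 (sort leq s) (size s)./2.

Definition mvs (a n : nat) (alpha : seq nat) (P : 'I_n -> seq nat) : nat :=
  med ([seq top a (P j) | j <- enum 'I_n] ++ alpha).

Definition is_profile (a b n : nat) (P : 'I_n -> seq nat) : Prop :=
  forall j, is_pref a b (P j).

Definition in_option_set (a b n : nat) (alpha : seq nat) (i : 'I_n)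
    (Pi : seq nat) (x : nat) : Prop :=
  exists P : 'I_n -> seq nat,
    is_profile a b P /\ P i = Pi /\ mvs a alpha P = x.

Definition vetoes (a b n : nat) (alpha : seq nat) (i : 'I_n) (x : nat) : Prop :=
  exists Pi : seq nat, is_pref a b Pi /\ ~ in_option_set a b alpha i Pi x.

From mathcomp Require Import all_boot zify.

(* If alpha_1 <= x <= alpha_(n-1), the other agents can all put
   x on top; then at most n-1 ballots lie strictly on either side of x, so x is
   the median whatever agent i reports.  If x < alpha_1, agent i ranking b
   first keeps its own ballot and all n-1 phantoms at or above alpha_1, so the
   median never falls below alpha_1 > x; symmetrically when x > alpha_(n-1). *)

Lemma count_enum_card (T : finType) (q : pred T) : count q (enum T) = #|q|.
Proof. by rewrite cardE -size_filter /enum_mem filter_predT. Qed.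

Lemma count_enum_ord_pred1 {n} (i : 'I_n) (q : pred 'I_n) :
  {in predC1 i, forall j, ~~ q j} -> count q (enum 'I_n) <= 1.
Proof.
move=> qi; rewrite count_enum_card -(card1 i); apply: subset_leq_card.
by apply/subsetP => j; apply: contraTT => /qi.
Qed.

Lemma count_enum_ord_predC1 {n} (i : 'I_n) (q : pred 'I_n) :
  ~~ q i -> count q (enum 'I_n) <= n.-1.
Proof.
move=> nqi; rewrite count_enum_card -[n in n.-1]card_ord -(cardC1 i).
apply: subset_leq_card; apply/subsetP => j qj /=.
by apply: contraNneq nqi => <-.
Qed.

Section SortedCount.

Variables (t : seq nat) (k v : nat).
Hypotheses (t_sorted : sorted leq t) (k_lt : k < size t).

Lemma sorted_count_lt_nth : nth 0 t k < v -> k < count (fun y => y < v) t.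
Proof.
move=> lt_v.
have : all (fun y => y < v) (take k.+1 t).
  apply/(all_nthP 0) => j; rewrite size_takel // => lt_jk; rewrite nth_take //.
  apply: leq_ltn_trans lt_v; apply: (sorted_leq_nth leq_trans leqnn) => //.
  by rewrite inE (leq_trans lt_jk).
rewrite all_count size_takel // => /eqP all_lt.
by rewrite -(cat_take_drop k.+1 t) count_cat all_lt leq_addr.
Qed.

Lemma sorted_count_gt_nth :
  v < nth 0 t k -> size t - k <= count (fun y => v < y) t.
Proof.
move=> gt_v.
have : all (fun y => v < y) (drop k t).
  apply/(all_nthP 0) => j; rewrite size_drop => lt_j; rewrite nth_drop.
  apply: leq_trans gt_v _; apply: (sorted_leq_nth leq_trans leqnn) => //;
    rewrite ?inE; lia.
rewrite all_count size_drop => /eqP all_gt.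
by rewrite -[in X in _ <= X](cat_take_drop k t) count_cat all_gt leq_addl.
Qed.

End SortedCount.

Lemma med_geq s v :
  odd (size s) -> count (fun y => y < v) s <= (size s)./2 -> v <= med s.
Proof.
move=> odd_s le_half; rewrite leqNgt; apply/negP.
have half_lt : (size s)./2 < size (sort leq s) by rewrite size_sort; lia.
move=> /(@sorted_count_lt_nth _ _ _ (sort_sorted leq_total s) half_lt).
by rewrite count_sort ltnNge le_half.
Qed.

Lemma med_leq s v :
  odd (size s) -> count (fun y => v < y) s <= (size s)./2 -> med s <= v.
Proof.
move=> odd_s le_half; rewrite leqNgt; apply/negP.
have half_lt : (size s)./2 < size (sort leq s) by rewrite size_sort; lia.
move=> /(@sorted_count_gt_nth _ _ _ (sort_sorted leq_total s) half_lt).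
rewrite count_sort size_sort; lia.
Qed.

Lemma count_lt_size {T : eqType} {p : pred T} {s : seq T} {z : T} :
  z \in s -> ~~ p z -> count p s < size s.
Proof.
move=> z_in npz; rewrite -(count_predC p s) -{1}[count p s]addn0 ltn_add2l.
by rewrite -has_count; apply/hasP; exists z.
Qed.

Definition pref_with_top (a b y : nat) : seq nat := y :: rem y (alts a b).

Lemma pref_with_top_is_pref a b y :
  inX a b y -> is_pref a b (pref_with_top a b y).
Proof.
move=> y_in; rewrite /is_pref perm_sym; apply: perm_to_rem.
by rewrite /alts mem_iota; move: y_in => /andP[]; lia.
Qed.

Section MedianVoterScheme.

Variables (a b n : nat) (alpha : seq nat).
Hypotheses (n_ge2 : 2 <= n) (size_alpha : size alpha = n.-1)
  (sorted_alpha : sorted leq alpha).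

Local Notation alpha_min := (nth 0 alpha 0).
Local Notation alpha_max := (nth 0 alpha n.-2).

Lemma mvs_geq (P : 'I_n -> seq nat) v :
  count (fun j => top a (P j) < v) (enum 'I_n) + count (fun y => y < v) alpha
    <= n.-1 ->
  v <= mvs a alpha P.
Proof.
move=> le_count; apply: med_geq;
  rewrite size_cat size_map size_enum_ord size_alpha; first by lia.
by rewrite count_cat count_map; apply: leq_trans le_count _; lia.
Qed.

Lemma mvs_leq (P : 'I_n -> seq nat) v :
  count (fun j => v < top a (P j)) (enum 'I_n) + count (fun y => v < y) alpha
    <= n.-1 ->
  mvs a alpha P <= v.
Proof.
move=> le_count; apply: med_leq;
  rewrite size_cat size_map size_enum_ord size_alpha; first by lia.
by rewrite count_cat count_map; apply: leq_trans le_count _; lia.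
Qed.

Lemma alpha_min_in : alpha_min \in alpha.
Proof. by apply: mem_nth; rewrite size_alpha; lia. Qed.

Lemma alpha_max_in : alpha_max \in alpha.
Proof. by apply: mem_nth; rewrite size_alpha; lia. Qed.

Lemma alpha_min_le y : y \in alpha -> alpha_min <= y.
Proof.
move=> /(nthP 0)[j lt_j <-].
by apply: (sorted_leq_nth leq_trans leqnn) => //;
  move: lt_j; rewrite ?inE size_alpha; lia.
Qed.

Lemma le_alpha_max y : y \in alpha -> y <= alpha_max.
Proof.
move=> /(nthP 0)[j lt_j <-].
by apply: (sorted_leq_nth leq_trans leqnn) => //;
  move: lt_j; rewrite ?inE size_alpha; lia.
Qed.

Lemma mvs_ge_alpha_min (i : 'I_n) (P : 'I_n -> seq nat) :
  alpha_min <= top a (P i) -> alpha_min <= mvs a alpha P.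
Proof.
move=> top_i; apply: mvs_geq.
have -> : count (fun y => y < alpha_min) alpha = 0.
  rewrite (@eq_in_count _ _ pred0) ?count_pred0 // => y.
  by move=> /alpha_min_le; rewrite ltnNge => ->.
by rewrite addn0; apply: (count_enum_ord_predC1 i); rewrite -leqNgt.
Qed.

Lemma mvs_le_alpha_max (i : 'I_n) (P : 'I_n -> seq nat) :
  top a (P i) <= alpha_max -> mvs a alpha P <= alpha_max.
Proof.
move=> top_i; apply: mvs_leq.
have -> : count (fun y => alpha_max < y) alpha = 0.
  rewrite (@eq_in_count _ _ pred0) ?count_pred0 // => y.
  by move=> /le_alpha_max; rewrite ltnNge => ->.
by rewrite addn0; apply: (count_enum_ord_predC1 i); rewrite -leqNgt.
Qed.

Lemma mvs_others_agree (i : 'I_n) (P : 'I_n -> seq nat) x :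
  alpha_min <= x <= alpha_max -> {in predC1 i, forall j, top a (P j) = x} ->
  mvs a alpha P = x.
Proof.
move=> /andP[min_le le_max] others.
apply/eqP; rewrite eqn_leq; apply/andP; split.
- apply: mvs_leq.
  have others_le : count (fun j => x < top a (P j)) (enum 'I_n) <= 1.
    by apply: (count_enum_ord_pred1 i) => j /others ->; rewrite ltnn.
  have alpha_lt : count (fun y => x < y) alpha < n.-1.
    by rewrite -size_alpha (count_lt_size alpha_min_in) // -leqNgt.
  lia.
- apply: mvs_geq.
  have others_le : count (fun j => top a (P j) < x) (enum 'I_n) <= 1.
    by apply: (count_enum_ord_pred1 i) => j /others ->; rewrite ltnn.
  have alpha_lt : count (fun y => y < x) alpha < n.-1.
    by rewrite -size_alpha (count_lt_size alpha_max_in) // -leqNgt.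
  lia.
Qed.

Lemma in_option_set_between (i : 'I_n) Pi x :
  is_pref a b Pi -> inX a b x -> alpha_min <= x <= alpha_max ->
  in_option_set a b alpha i Pi x.
Proof.
move=> Pi_pref x_in between.
exists (fun j => if j == i then Pi else pref_with_top a b x); split; [|split].
- by move=> j; case: eqP => // _; apply: pref_with_top_is_pref.
- by rewrite eqxx.
- by apply: (mvs_others_agree i) => // j /negbTE ->.
Qed.

Hypothesis alpha_in : all (inX a b) alpha.

Lemma vetoes_lt_alpha_min (i : 'I_n) x : x < alpha_min -> vetoes a b alpha i x.
Proof.
move=> lt_x; have /andP[a_le le_b] := allP alpha_in _ alpha_min_in.
exists (pref_with_top a b b); split.
  by apply: pref_with_top_is_pref; rewrite /inX leqnn (leq_trans a_le le_b).
move=> [P [_ [P_i mvs_x]]]; move: lt_x; rewrite -mvs_x ltnNge => /negP; apply.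
by apply: (mvs_ge_alpha_min i); rewrite P_i.
Qed.

Lemma vetoes_gt_alpha_max (i : 'I_n) x : alpha_max < x -> vetoes a b alpha i x.
Proof.
move=> gt_x; have /andP[a_le le_b] := allP alpha_in _ alpha_max_in.
exists (pref_with_top a b a); split.
  by apply: pref_with_top_is_pref; rewrite /inX leqnn (leq_trans a_le le_b).
move=> [P [_ [P_i mvs_x]]]; move: gt_x; rewrite -mvs_x ltnNge => /negP; apply.
by apply: (mvs_le_alpha_max i); rewrite P_i.
Qed.

End MedianVoterScheme.

Theorem lemma1 (a b n : nat) (alpha : seq nat) (i : 'I_n) (x : nat) :
  a < b -> 2 <= n ->
  size alpha = n.-1 -> sorted leq alpha -> all (inX a b) alpha ->
  inX a b x ->
  vetoes a b alpha i x <-> (x < nth 0 alpha 0 \/ x > nth 0 alpha n.-2).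
Proof.
move=> _ n_ge2 size_alpha sorted_alpha alpha_in x_in.
split=> [[Pi [Pi_pref not_option]] | [lt_x | gt_x]].
- case: (ltnP x (nth 0 alpha 0)) => [|min_le]; first by left.
  case: (ltnP (nth 0 alpha n.-2) x) => [|le_max]; first by right.
  by case: not_option; apply: in_option_set_between; rewrite ?min_le.
- exact: vetoes_lt_alpha_min.
- exact: vetoes_gt_alpha_max.
Qed.
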